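(* Let $\mathcal{G}=(\mathcal{V},\mathcal{E},\mathcal{W})$ be a connected, simple, undirected graph with vertex set $\mathcal{V}=\{1,\dots,n\}$, edge set $\mathcal{E}=\{e_1,\dots,e_m\}$ and positive edge weights $w_1,\dots,w_m$, each edge being given an arbitrary but fixed orientation. Let $D$ be its $n\times m$ incidence matrix, $W=\mathrm{diag}(w_1,\dots,w_m)$, $Q=DW^{-1}$, and for two distinct vertices $s,t$ let $y=y^{(s,t)}\in\mathbb{R}^n$ be the vector with $y(s)=+1$, $y(t)=-1$ and all other entries $0$. Assume (Assumption A1) that for every vertex $v$, the shortest (minimum total weight) path between $s$ and $v$ is unique and the shortest path between $t$ and $v$ is unique. Then for every $\lambda>0$ the lasso problem $$\min_{\beta\in\mathbb{R}^m}\ \tfrac12\|y-Q\beta\|_2^2+\lambda\|\beta\|_1$$ has a unique solution.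
   Context: The incidence matrix $D$ has entries $[D]_{ij}=+1$ if vertex $i$ is the tail of edge $e_j$, $-1$ if vertex $i$ is the head of edge $e_j$, and $0$ otherwise. The length of a path is the sum of the weights of its edges. *)

From HB Require Import structures.
From mathcomp Require Import all_boot all_order all_algebra.
From mathcomp Require Import reals.
Set Implicit Arguments. Unset Strict Implicit. Unset Printing Implicit Defensive.
Import Order.TTheory GRing.Theory Num.Theory.
Local Open Scope ring_scope.

(* A graph on vertices 'I_n with m edges; edge j is oriented from tl j (tail)
   to hd j (head). *)
Section Graph.
Variables (R : realType) (n m : nat) (tl hd : 'I_m -> 'I_n) (w : 'I_m -> R).

Definition joins (j : 'I_m) (u v : 'I_n) : bool :=
  ((tl j == u) && (hd j == v)) || ((tl j == v) && (hd j == u)).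

Definition simple_graph : Prop :=
  (forall j, tl j != hd j) /\
  (forall j k, j != k -> ~~ joins k (tl j) (hd j)).

Definition adj : rel 'I_n := fun u v => [exists j, joins j u v].

(* p is a (simple) path from u to v, given by its vertex sequence u :: p *)
Definition is_path (u v : 'I_n) (p : seq 'I_n) : bool :=
  [&& path adj u p, uniq (u :: p) & last u p == v].

Definition connected_graph : Prop :=
  forall u v : 'I_n, exists p, is_path u v p.

(* weight of the edge between u and v (graph simple: at most one such edge) *)
Definition edge_weight (u v : 'I_n) : R := \sum_(j | joins j u v) w j.

Definition path_length (u : 'I_n) (p : seq 'I_n) : R :=
  \sum_(e <- zip (u :: p) p) edge_weight e.1 e.2.

Definition shortest_path (u v : 'I_n) (p : seq 'I_n) : Prop :=
  is_path u v p /\ forall q, is_path u v q -> path_length u p <= path_length u q.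

Definition unique_shortest_path (u v : 'I_n) : Prop :=
  exists! p, shortest_path u v p.

Definition assumption_A1 (s t : 'I_n) : Prop :=
  forall v : 'I_n, unique_shortest_path s v /\ unique_shortest_path t v.

Definition incidence : 'M[R]_(n, m) :=
  \matrix_(i, j) ((i == tl j)%:R - (i == hd j)%:R).

Definition Wmx : 'M[R]_m := diag_mx (\row_j w j).

Definition Qmx : 'M[R]_(n, m) := incidence *m invmx Wmx.

Definition yvec (s t : 'I_n) : 'cV[R]_n :=
  \col_i ((i == s)%:R - (i == t)%:R).

Definition lasso_obj (y : 'cV[R]_n) (lambda : R) (b : 'cV[R]_m) : R :=
  2^-1 * (\sum_i (y - Qmx *m b) i 0 ^+ 2) + lambda * \sum_j `|b j 0|.

End Graph.

From Pilot Require Import Defs.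
From HB Require Import structures.
From mathcomp Require Import all_boot all_order all_algebra.
From mathcomp Require Import reals.
From mathcomp Require Import ring lra.
From mathcomp Require Import boolp classical_sets set_interval.
From mathcomp Require Import topology normedtype derive.
Set Implicit Arguments. Unset Strict Implicit. Unset Printing Implicit Defensive.
Import Order.TTheory GRing.Theory Num.Theory.
Import numFieldNormedType.Exports.
Local Open Scope ring_scope.

(* Any two lasso minimizers have the same fit Q beta, because the squared loss is
   strictly convex in the fit; hence they have the same residual r = y - Q beta.
   Writing f = W^-1 beta, so that Q beta = D f, the optimality conditions say that r
   is lambda-Lipschitz along edges, that r drops by exactly lambda w_j along every
   edge carrying flow, and that y - r is the divergence of f.  As y is a unit source
   at s and a unit sink at t, following the flow backwards from an edge a -> b
   climbs r up to s unless r becomes negative, and following it forwards descends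
   to t unless r becomes positive; since r a > r b, either
   r s - r a = lambda d(s, a) or r b - r t = lambda d(b, t).  Such edges lie on
   shortest paths from s or to t, which by Assumption A1 form two trees.  The
   difference of the flows of two minimizers is a circulation supported on these
   trees, and peeling off leaves in the order of r shows that it vanishes. *)

Lemma fin_valuation_ind (T : finType) (R : numDomainType) (g : T -> R) (P : T -> Prop) :
  (forall a, (forall c, g c < g a -> P c) -> P a) -> forall a, P a.
Proof.
move=> IH; suff ind k a : (#|[set c | (g c < g a)%R]| <= k)%N -> P a.
  by move=> a; apply: (ind _ a).
elim: k a => [|k IHk] a Ha; apply: IH => c ca.
  by move: Ha; rewrite leqn0 => /eqP/cards0_eq/setP/(_ c); rewrite !inE ca.
apply: IHk; rewrite -ltnS (leq_trans _ Ha) // proper_card //.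
apply/fintype.properP; split.
  by apply/fintype.subsetP => d; rewrite !inE => /lt_trans; apply.
by exists c; rewrite !inE ?ltxx.
Qed.

Lemma sum_le0_has_neg (I : finType) (R : realDomainType) (F : I -> R) j :
  0 < F j -> \sum_i F i <= 0 -> exists k, F k < 0.
Proof.
move=> Fj_gt0 sum_le0; apply/existsP; apply: contraLR sum_le0 => /existsPn F_ge0.
rewrite -ltNge (bigD1 j) //= ltr_pwDl // sumr_ge0 // => i _.
by rewrite leNgt F_ge0.
Qed.

Lemma ler0_linear_quadratic (R : realFieldType) (a c d : R) : 0 < d ->
  (forall e, 0 < e -> e < d -> e * a <= e ^+ 2 * c) -> a <= 0.
Proof.
move=> d_gt0 small; rewrite leNgt; apply/negP => a_gt0.
pose e := Num.min (d / 2) (a / (`|c| + 1)).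
have c1_gt0 : 0 < `|c| + 1 by rewrite ltr_wpDl.
have e_gt0 : 0 < e by rewrite lt_min !divr_gt0.
have e_lt_d : e < d by rewrite gt_min ltr_pdivrMr // ltr_pMr // ltr1n orTb.
have e_small : e * (`|c| + 1) <= a by rewrite -ler_pdivlMr // ge_min lexx orbT.
have := small e e_gt0 e_lt_d; have := ler_norm c; have := normr_ge0 c; nra.
Qed.

Section ContinuityRules.
Context {R : realType} {T : topologicalType}.
Implicit Types f g : T -> R.

Lemma continuous_add f g : continuous f -> continuous g -> continuous (fun x => f x + g x).
Proof. by move=> cf cg x; apply: cvgD; [exact: cf | exact: cg]. Qed.

Lemma continuous_mul f g : continuous f -> continuous g -> continuous (fun x => f x * g x).
Proof. by move=> cf cg x; apply: cvgM; [exact: cf | exact: cg]. Qed.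

Lemma continuous_normr f : continuous f -> continuous (fun x => `|f x|).
Proof. by move=> cf x; apply: cvg_norm; exact: cf. Qed.

Lemma continuous_sum (I : finType) (F : I -> T -> R) :
  (forall i, continuous (F i)) -> continuous (fun x => \sum_i F i x).
Proof. by move=> cF; apply: continuous_big => [|i _]; [exact: add_continuous | exact: cF]. Qed.

End ContinuityRules.

Lemma rV_coercive_min (R : realType) k (g : 'rV[R]_k -> R) (c : R) :
  0 <= c -> continuous g -> (forall (v : 'rV_k) i, c < `|v ord0 i| -> g 0 < g v) ->
  exists v, forall v', g v <= g v'.
Proof.
move=> c_ge0 g_cont g_coercive.
pose box := [set v : 'rV[R]_k | forall i, `[- c, c] (v ord0 i)]%classic.
have box0 : box 0 by move=> i /=; rewrite mxE in_itv /= oppr_le0 c_ge0.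
have box_compact : compact box.
  by apply: (@rV_compact _ _ (fun=> `[- c, c]%classic)) => i; apply: segment_compact.
have [v _ v_min] :=
  EVT_min_rV (ex_intro _ _ box0) box_compact (continuous_subspaceT g_cont).
exists v => v'; case: (pselect (box v')) => [box_v'|/existsNP[i]].
  by apply: v_min; rewrite inE.
rewrite /= in_itv /= -ler_norml => /negP; rewrite -ltNge => /g_coercive lt_v'.
by apply: le_trans (ltW lt_v'); apply: v_min; rewrite inE.
Qed.

Section Lasso.
Variables (R : realType) (n m : nat) (Q : 'M[R]_(n, m)) (lam : R).
Hypothesis lam_gt0 : 0 < lam.
Implicit Types (y : 'cV[R]_n) (b : 'cV[R]_m).

Definition lasso y b : R :=
  2^-1 * (\sum_i (y - Q *m b) i 0 ^+ 2) + lam * \sum_j `|b j 0|.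

Definition lasso_min y b : Prop := forall b', lasso y b <= lasso y b'.

(* Compactness is available for boxes of row vectors, hence the transposes. *)
Lemma lasso_rV_continuous y : continuous (fun v : 'rV[R]_m => lasso y v^T).
Proof.
have entry_cont i : continuous (fun v : 'rV[R]_m => (y - Q *m v^T) i 0).
  have -> : (fun v : 'rV[R]_m => (y - Q *m v^T) i 0) =
            (fun v => y i 0 + \sum_k - Q i k * v 0 k).
    apply: funext => v; rewrite !mxE -sumrN; congr (_ + _).
    by apply: eq_bigr => k _; rewrite !mxE mulNr.
  apply: continuous_add; first exact: cst_continuous.
  apply: continuous_sum => k; apply: continuous_mul; first exact: cst_continuous.
  exact: coord_continuous.
apply: continuous_add; apply: continuous_mul; try exact: cst_continuous.
  by apply: continuous_sum => i; apply: continuous_mul; apply: entry_cont.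
apply: continuous_sum => j; apply: continuous_normr.
have -> : (fun v : 'rV[R]_m => v^T j 0) = (fun v => v 0 j) by apply: funext => v; rewrite mxE.
exact: coord_continuous.
Qed.

Lemma lasso_min_exists y : exists b, lasso_min y b.
Proof.
have [v v_min] : exists v : 'rV_m, forall v', lasso y v^T <= lasso y v'^T.
  apply: (rV_coercive_min (c := lasso y 0 / lam) _ (@lasso_rV_continuous y)).
    rewrite divr_ge0 ?addr_ge0 ?mulr_ge0 ?sumr_ge0 ?invr_ge0 ?(ltW lam_gt0) //.
    by move=> i _; apply: sqr_ge0.
  move=> v i; rewrite ltr_pdivrMr // mulrC => lt_v; rewrite trmx0.
  apply: (lt_le_trans lt_v); rewrite /lasso -[X in X <= _]add0r lerD //.
    by rewrite mulr_ge0 ?invr_ge0 ?sumr_ge0 // => k _; apply: sqr_ge0.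
  by rewrite ler_pM2l // (bigD1 i) //= mxE lerDl sumr_ge0.
by exists v^T => b; have := v_min b^T; rewrite trmxK.
Qed.

Lemma lasso_midpoint y b1 b2 :
  lasso y (2^-1 *: (b1 + b2)) + 8^-1 * \sum_i ((Q *m b1) i 0 - (Q *m b2) i 0) ^+ 2
  <= 2^-1 * (lasso y b1 + lasso y b2).
Proof.
pose a i := (Q *m b1) i 0; pose c i := (Q *m b2) i 0.
have fitE b i : (y - Q *m b) i 0 = y i 0 - (Q *m b) i 0 by rewrite !mxE.
have quad : \sum_i (y - Q *m (2^-1 *: (b1 + b2))) i 0 ^+ 2 + 4^-1 * \sum_i (a i - c i) ^+ 2
    = 2^-1 * (\sum_i (y - Q *m b1) i 0 ^+ 2 + \sum_i (y - Q *m b2) i 0 ^+ 2).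
  rewrite mulrDr !mulr_sumr -!big_split /=; apply: eq_bigr => i _.
  have midE : (Q *m (2^-1 *: (b1 + b2))) i 0 = 2^-1 * (a i + c i).
    by rewrite /a /c -scalemxAr mulmxDr !mxE.
  by rewrite !fitE midE -/(a i) -/(c i); field.
have l1 : \sum_j `|(2^-1 *: (b1 + b2)) j 0| <= 2^-1 * (\sum_j `|b1 j 0| + \sum_j `|b2 j 0|).
  rewrite -big_split mulr_sumr; apply: ler_sum => j _.
  rewrite !mxE normrM ger0_norm ?invr_ge0 // ler_pM2l ?invr_gt0 //; exact: ler_normD.
have := ler_wpM2l (ltW lam_gt0) l1; rewrite /lasso; lra.
Qed.

Lemma lasso_min_fit y b1 b2 : lasso_min y b1 -> lasso_min y b2 -> Q *m b1 = Q *m b2.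
Proof.
move=> min1 min2; pose gap := \sum_i ((Q *m b1) i 0 - (Q *m b2) i 0) ^+ 2.
have gap0 : gap = 0.
  apply/le_anti; rewrite sumr_ge0 ?andbT => [|i _]; last exact: sqr_ge0.
  have := lasso_midpoint y b1 b2; have := min1 (2^-1 *: (b1 + b2)).
  have := min2 b1; have := min1 b2; rewrite -/gap; lra.
apply/matrixP => i j; rewrite [j]ord1; move/eqP: gap0.
rewrite /gap psumr_eq0 => [/allP/(_ i (mem_index_enum _))|k _]; last exact: sqr_ge0.
by rewrite sqrf_eq0 subr_eq0 => /eqP.
Qed.

Definition lasso_corr y b j : R := \sum_i Q i j * (y - Q *m b) i 0.

Lemma lasso_min_coord_perturb y b j e : lasso_min y b ->
  e * lasso_corr y b j - lam * (`|b j 0 + e| - `|b j 0|)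
  <= e ^+ 2 * (2^-1 * \sum_i Q i j ^+ 2).
Proof.
move=> bmin; have := bmin (b + e *: delta_mx j 0); rewrite -subr_ge0.
have resE i : (y - Q *m (b + e *: delta_mx j 0)) i 0 = (y - Q *m b) i 0 - e * Q i j.
  by rewrite mulmxDr -scalemxAr -colE opprD addrA !mxE.
have l1E : \sum_k `|(b + e *: delta_mx j 0) k 0|
    = \sum_k `|b k 0| + (`|b j 0 + e| - `|b j 0|).
  rewrite (bigD1 j) //= [in RHS](bigD1 j) //= !mxE eqxx mulr1.
  rewrite (eq_bigr (fun k => `|b k 0|)) => [|k /negbTE kj]; first by ring.
  by rewrite !mxE kj mulr0 addr0.
rewrite /lasso l1E (eq_bigr _ (fun i _ => congr1 (fun x => x ^+ 2) (resE i))).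
have quadE : \sum_i ((y - Q *m b) i 0 - e * Q i j) ^+ 2
    = \sum_i (y - Q *m b) i 0 ^+ 2 - 2 * e * lasso_corr y b j + e ^+ 2 * \sum_i Q i j ^+ 2.
  rewrite /lasso_corr !mulr_sumr -sumrB -big_split /=.
  by apply: eq_bigr => i _; ring.
rewrite quadE; lra.
Qed.

Lemma lasso_min_corr_le y b j : lasso_min y b -> `|lasso_corr y b j| <= lam.
Proof.
move=> bmin.
have dir u : `|u| = 1 -> u * lasso_corr y b j <= lam.
  move=> u1; have u2 : u ^+ 2 = 1 by apply/eqP; rewrite sqr_norm_eq1 u1.
  rewrite -subr_le0; apply: (ler0_linear_quadratic ltr01) => e e_gt0 _.
  have tri : `|b j 0 + e * u| - `|b j 0| <= e.
    by rewrite lerBlDl (le_trans (ler_normD _ _)) // normrM u1 mulr1 gtr0_norm.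
  have := lasso_min_coord_perturb j (e * u) bmin; rewrite exprMn u2 mulr1; apply: le_trans.
  by rewrite mulrBr mulrA lerD2l lerN2 [e * lam]mulrC ler_pM2l.
rewrite ler_norml lerNl -mulN1r dir ?normrN ?normr1 //=.
by rewrite -[lasso_corr y b j]mul1r dir ?normr1.
Qed.

Lemma lasso_min_corr_sg y b j : lasso_min y b -> b j 0 != 0 ->
  lasso_corr y b j = lam * Num.sg (b j 0).
Proof.
move=> bmin bj0; set u := Num.sg (b j 0).
have u1 : `|u| = 1 by rewrite normr_sg bj0.
have u2 : u ^+ 2 = 1 by apply/eqP; rewrite sqr_norm_eq1 u1.
have lam_le : lam <= u * lasso_corr y b j.
  have bj_gt0 : 0 < `|b j 0| by rewrite normr_gt0.
  rewrite -subr_le0; apply: (ler0_linear_quadratic bj_gt0) => e e_gt0 e_lt.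
  have := lasso_min_coord_perturb j (- (e * u)) bmin.
  have -> : `|b j 0 + - (e * u)| = `|b j 0| - e.
    rewrite {1}(numEsg (b j 0)) -/u.
    have -> : u * `|b j 0| + - (e * u) = u * (`|b j 0| - e) by ring.
    by rewrite normrM u1 mul1r ger0_norm // subr_ge0 ltW.
  rewrite sqrrN exprMn u2 mulr1; apply: le_trans.
  by rewrite le_eqVlt; apply/orP; left; apply/eqP; ring.
have le_lam : u * lasso_corr y b j <= lam.
  by rewrite (le_trans (ler_norm _)) // normrM u1 mul1r lasso_min_corr_le.
have ucorr : u * lasso_corr y b j = lam by apply/le_anti; rewrite le_lam lam_le.
by rewrite -ucorr mulrAC -expr2 u2 mul1r.
Qed.

End Lasso.

Section WeightedGraph.
Variables (R : realType) (n m : nat) (tl hd : 'I_m -> 'I_n) (w : 'I_m -> R).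
Hypothesis simple : simple_graph tl hd.
Hypothesis w_gt0 : forall j, 0 < w j.

Local Notation joins := (joins tl hd).
Local Notation ew := (edge_weight tl hd w).
Local Notation plen := (path_length tl hd w).
Local Notation is_path := (is_path tl hd).

Lemma joinsC j u v : joins j u v = joins j v u.
Proof. by rewrite /Defs.joins orbC. Qed.

Lemma joins_endpoint j u v : joins j u v -> (u == tl j) || (u == hd j).
Proof. by case/orP=> [/andP[/eqP <- _]|/andP[_ /eqP <-]]; rewrite eqxx ?orbT. Qed.

Lemma joins_inj j k u v : joins j u v -> joins k u v -> j = k.
Proof.
move=> Jj Jk; apply/eqP/negPn/negP => /simple.2.
by case/orP: Jj => /andP[/eqP -> /eqP ->]; [rewrite Jk | rewrite joinsC Jk].
Qed.

Lemma edge_weight_joins j u v : joins j u v -> ew u v = w j.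
Proof.
move=> Jj; rewrite /edge_weight (bigD1 j) //= big1 ?addr0 // => k /andP[Jk kj].
by rewrite (joins_inj Jj Jk) eqxx in kj.
Qed.

Lemma edge_weight_ge0 u v : 0 <= ew u v.
Proof. by apply: sumr_ge0 => j _; apply: ltW. Qed.

Lemma path_length_nil u : plen u [::] = 0.
Proof. by rewrite /path_length big_nil. Qed.

Lemma path_length_cons u v p : plen u (v :: p) = ew u v + plen v p.
Proof. by rewrite /path_length big_cons. Qed.

Lemma path_length_cat u p q : plen u (p ++ q) = plen u p + plen (last u p) q.
Proof.
elim: p u => [|v p IH] u /=; first by rewrite path_length_nil add0r.
by rewrite !path_length_cons IH addrA.
Qed.

Lemma path_length_ge0 u p : 0 <= plen u p.
Proof.
elim: p u => [|v p IH] u; first by rewrite path_length_nil.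
by rewrite path_length_cons addr_ge0 ?edge_weight_ge0.
Qed.

Lemma is_path_nil u : is_path u u [::].
Proof. by rewrite /Defs.is_path /= eqxx. Qed.

Lemma is_path_last u v p : is_path u v p -> last u p = v.
Proof. by case/and3P=> _ _ /eqP. Qed.

Lemma is_path_prefix u v p b : is_path u v p -> b \in u :: p ->
  exists2 q, is_path u b q & plen u q <= plen u p.
Proof.
move=> up; rewrite inE => /predU1P[->|bp].
  by exists [::]; rewrite ?is_path_nil // path_length_nil path_length_ge0.
move: up; case/splitPr: bp => p1 p2 /and3P[].
rewrite -cat_rcons cat_path -cat_cons cat_uniq => /andP[up1 _] /andP[uu1 _] _.
exists (rcons p1 b); first by rewrite /Defs.is_path up1 uu1 last_rcons eqxx.
by rewrite path_length_cat lerDl path_length_ge0.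
Qed.

Lemma is_path_rcons u a b p j : is_path u a p -> joins j a b -> b \notin u :: p ->
  is_path u b (rcons p b) /\ plen u (rcons p b) = plen u p + w j.
Proof.
move=> /and3P[up uu /eqP la] Jj bp; split.
  rewrite /Defs.is_path rcons_path up la -rcons_cons rcons_uniq bp uu last_rcons.
  by rewrite eqxx /= !andbT /adj; apply/existsP; exists j.
by rewrite -cats1 path_length_cat path_length_cons path_length_nil addr0 la
  (edge_weight_joins Jj).
Qed.

Section ShortestPaths.
Variables (x : 'I_n) (P : 'I_n -> seq 'I_n).
Hypothesis P_shortest : forall v, shortest_path tl hd w x v (P v).
Hypothesis shortest_uniq : forall v, unique_shortest_path tl hd w x v.

Definition dist v := plen x (P v).

Lemma dist_min v q : is_path x v q -> dist v <= plen x q.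
Proof. exact: (P_shortest v).2. Qed.

Lemma dist_root : dist x = 0.
Proof.
apply/le_anti; rewrite path_length_ge0 andbT -(path_length_nil x).
exact/dist_min/is_path_nil.
Qed.

Lemma dist_joins j a b : joins j a b -> dist b <= dist a + w j.
Proof.
move=> Jj; have Pa := (P_shortest a).1.
case: (boolP (b \in x :: P a)) => [bPa|bPa].
  have [q bq le_q] := is_path_prefix Pa bPa.
  by rewrite (le_trans (dist_min bq)) // (le_trans le_q) // lerDl ltW.
have [bP <-] := is_path_rcons Pa Jj bPa.
exact: dist_min.
Qed.

Lemma shortest_path_rcons j a b : joins j a b -> dist b = dist a + w j ->
  P b = rcons (P a) b.
Proof.
move=> Jj db; have Pa := (P_shortest a).1.
have bPa : b \notin x :: P a.
  apply/negP => bPa; have [q /dist_min bq le_q] := is_path_prefix Pa bPa.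
  by have := w_gt0 j; rewrite /dist in db le_q bq *; lra.
have [bP lenP] := is_path_rcons Pa Jj bPa.
have sp_b : shortest_path tl hd w x b (rcons (P a) b).
  by split=> // q /dist_min; rewrite lenP -db.
have [p0 [_ p0_uniq]] := shortest_uniq b.
by rewrite -(p0_uniq _ sp_b) (p0_uniq _ (P_shortest b)).
Qed.

Lemma dist_parent_uniq j k a a' b : joins j a b -> joins k a' b ->
  dist b = dist a + w j -> dist b = dist a' + w k -> a = a'.
Proof.
move=> Jj Jk db db'.
have Pb : rcons (P a) b = rcons (P a') b.
  by rewrite -(shortest_path_rcons Jj db) (shortest_path_rcons Jk db').
rewrite -(is_path_last (P_shortest a).1) -(is_path_last (P_shortest a').1).
by rewrite (@rcons_injl _ b _ _ Pb).
Qed.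

Variables (rho : 'I_n -> R) (lam : R).
Hypothesis lam_gt0 : 0 < lam.
Hypothesis rho_lip : forall j, `|rho (tl j) - rho (hd j)| <= lam * w j.

Lemma lip_joins j u v : joins j u v -> `|rho u - rho v| <= lam * w j.
Proof. by case/orP=> /andP[/eqP <- /eqP <-]; rewrite // distrC. Qed.

Lemma lip_path u p : path (adj tl hd) u p ->
  `|rho u - rho (last u p)| <= lam * plen u p.
Proof.
elim: p u => [|v p IH] u /=; first by rewrite subrr normr0 path_length_nil mulr0.
case/andP=> /existsP[j Jj] vp.
rewrite path_length_cons (edge_weight_joins Jj) mulrDr.
rewrite (_ : rho u - _ = (rho u - rho v) + (rho v - rho (last v p))); last by ring.
by rewrite (le_trans (ler_normD _ _)) // lerD ?lip_joins ?IH.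
Qed.

Lemma dist_lip v : rho x - rho v <= lam * dist v.
Proof.
have /and3P[xP _ /eqP xPv] := (P_shortest v).1.
by have := lip_path xP; rewrite xPv; apply: le_trans; apply: ler_norm.
Qed.

Definition tight v : bool := rho x - rho v == lam * dist v.

Lemma tight_root : tight x.
Proof. by rewrite /tight subrr dist_root mulr0. Qed.

Lemma tight_step k c a : tight c -> joins k c a -> rho c - rho a = lam * w k ->
  tight a /\ dist a = dist c + w k.
Proof.
move=> /eqP tc Jk drop.
have da : dist a = dist c + w k.
  apply/le_anti; rewrite dist_joins //= -(ler_pM2l lam_gt0) mulrDr -tc -drop.
  by have := dist_lip a; lra.
by split=> //; rewrite /tight da mulrDr -tc -drop; apply/eqP; ring.
Qed.

End ShortestPaths.

Local Notation D := (incidence R tl hd).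
Local Notation Q := (Qmx tl hd w).

Lemma incidence_tl j : D (tl j) j = 1.
Proof. by rewrite mxE eqxx (negbTE (simple.1 j)) subr0. Qed.

Lemma incidence_hd j : D (hd j) j = -1.
Proof. by rewrite mxE eqxx eq_sym (negbTE (simple.1 j)) sub0r. Qed.

Lemma incidence_eq0 v j : v != tl j -> v != hd j -> D v j = 0.
Proof. by move=> /negbTE vtl /negbTE vhd; rewrite mxE vtl vhd subrr. Qed.

Lemma sum_incidence j (F : 'I_n -> R) : \sum_v D v j * F v = F (tl j) - F (hd j).
Proof.
rewrite (bigD1 (tl j)) // (bigD1 (hd j)) 1?eq_sym ?simple.1 //= big1 ?addr0.
  by rewrite incidence_tl incidence_hd mul1r mulN1r.
by move=> v /andP[vhd vtl]; rewrite incidence_eq0 ?mul0r.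
Qed.

Lemma Qmx_entry i j : Q i j = D i j / w j.
Proof.
have W_inv : Wmx w *m diag_mx (\row_j (w j)^-1) = 1%:M.
  apply/matrixP => a b; rewrite mul_diag_mx !mxE.
  by case: eqVneq => [->|_]; rewrite ?mulr1n ?mulr0n ?mulr0 // mulfV ?gt_eqF.
have invW : invmx (Wmx w) = diag_mx (\row_j (w j)^-1).
  by rewrite -[invmx _]mulmx1 -W_inv mulmxA mulVmx ?mul1mx ?(mulmx1_unit W_inv).1.
by rewrite /Qmx invW mul_mx_diag !mxE.
Qed.

Lemma Qmx_fit (b : 'cV[R]_m) v : (Q *m b) v 0 = \sum_j D v j * (b j 0 / w j).
Proof. by rewrite mxE; apply: eq_bigr => j _; rewrite Qmx_entry mulrAC -mulrA. Qed.

Lemma lasso_corr_graph (y : 'cV[R]_n) (b : 'cV[R]_m) j :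
  lasso_corr Q y b j = ((y - Q *m b) (tl j) 0 - (y - Q *m b) (hd j) 0) / w j.
Proof.
rewrite /lasso_corr -(sum_incidence j (fun v => (y - Q *m b) v 0)) mulr_suml.
apply: eq_bigr => v _.
by rewrite Qmx_entry mulrAC.
Qed.

Lemma incidence_joins_neq0 j a b : joins j a b -> D a j != 0.
Proof.
by case/joins_endpoint/orP=> /eqP->; rewrite ?incidence_tl ?incidence_hd ?oppr_eq0 oner_neq0.
Qed.

Lemma incidence_neq0_joins v k a b : D v k != 0 -> joins k a b -> v = a \/ v = b.
Proof.
move=> vk Jk; case: (eqVneq v a) => [|va]; [by left | right].
move: vk; apply: contraNeq => vb.
by rewrite incidence_eq0 //; case/orP: Jk => /andP[/eqP tk /eqP hk]; rewrite ?tk ?hk.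
Qed.

(* The optimality conditions of the lasso for Q = D W^-1, in terms of the residual
   r = y - Q beta and the edge flow f = W^-1 beta. *)
Definition kkt_flow (lam : R) (y r : 'I_n -> R) (f : 'I_m -> R) : Prop :=
  [/\ forall j, `|r (tl j) - r (hd j)| <= lam * w j,
      forall j, f j != 0 -> r (tl j) - r (hd j) = lam * w j * Num.sg (f j)
    & forall v, \sum_j D v j * f j = y v - r v].

Lemma lasso_min_kkt_flow lam (y : 'cV[R]_n) (b : 'cV[R]_m) :
  0 < lam -> lasso_min Q lam y b ->
  kkt_flow lam (fun v => y v 0) (fun v => (y - Q *m b) v 0) (fun j => b j 0 / w j).
Proof.
move=> lam_gt0 bmin; split=> [j|j|v].
- have := lasso_min_corr_le lam_gt0 j bmin.
  by rewrite lasso_corr_graph normrM normfV (gtr0_norm (w_gt0 j)) ler_pdivrMr.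
- move=> fj0; have bj0 : b j 0 != 0 by apply: contraNneq fj0 => ->; rewrite mul0r.
  have := lasso_min_corr_sg lam_gt0 bmin bj0; rewrite lasso_corr_graph => corrE.
  rewrite -[LHS](divfK (lt0r_neq0 (w_gt0 j))) corrE.
  by rewrite sgrM sgrV (gtr0_sg (w_gt0 j)) mulr1 mulrAC.
- by rewrite -Qmx_fit !mxE; ring.
Qed.

Lemma kkt_flow_opp lam y r f : kkt_flow lam y r f ->
  kkt_flow lam (fun v => - y v) (fun v => - r v) (fun j => - f j).
Proof.
case=> r_lip f_steep div; split=> [j|j|v].
- by rewrite -opprD normrN.
- by rewrite oppr_eq0 sgrN mulrN -opprD => /f_steep ->.
- by under eq_bigr do rewrite mulrN; rewrite sumrN div opprB opprK addrC.
Qed.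

Definition steep (lam : R) (r : 'I_n -> R) j a b : Prop :=
  joins j a b /\ r a - r b = lam * w j.

Lemma flow_out lam y r f a j : kkt_flow lam y r f -> 0 < D a j * f j ->
  exists2 b, steep lam r j a b & D b j * f j < 0.
Proof.
case=> _ f_steep _ out.
have /f_steep drop : f j != 0 by apply: contraTneq out => ->; rewrite mulr0 ltxx.
move: out; case: (eqVneq a (tl j)) => [-> | a_tl] out.
  rewrite incidence_tl mul1r in out; rewrite gtr0_sg // mulr1 in drop.
  exists (hd j); last by rewrite incidence_hd mulN1r oppr_lt0.
  by split; rewrite // /Defs.joins !eqxx.
move: out; case: (eqVneq a (hd j)) => [-> | a_hd] out; last first.
  by rewrite incidence_eq0 ?mul0r ?ltxx in out.
rewrite incidence_hd mulN1r oppr_gt0 in out; rewrite ltr0_sg // mulrN1 in drop.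
exists (tl j); last by rewrite incidence_tl mul1r.
by split; [rewrite /Defs.joins !eqxx orbT | rewrite -opprB drop opprK].
Qed.

Lemma flow_in lam y r f a j : kkt_flow lam y r f -> D a j * f j < 0 ->
  exists2 c, steep lam r j c a & 0 < D c j * f j.
Proof.
move=> /kkt_flow_opp kkt_opp; rewrite -oppr_gt0 -mulrN => /(flow_out kkt_opp)[c [Jc drop]].
rewrite mulrN oppr_lt0 => in_c; exists c => //; split; first by rewrite joinsC.
by rewrite -drop opprK addrC.
Qed.

Section Propagation.
Variables (x : 'I_n) (P : 'I_n -> seq 'I_n) (lam : R) (y r : 'I_n -> R) (f : 'I_m -> R).
Hypothesis P_shortest : forall v, shortest_path tl hd w x v (P v).
Hypothesis lam_gt0 : 0 < lam.
Hypothesis kkt : kkt_flow lam y r f.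
Hypothesis y_le0 : forall v, v != x -> y v <= 0.

(* Follow the flow backwards, climbing r, to a vertex where y exceeds r: that
   vertex is x, or else r is negative there. *)
Lemma outflow_tight_or_neg a j : 0 < D a j * f j -> tight x P r lam a \/ r a < 0.
Proof.
have [r_lip _ div] := kkt.
move: j; elim/(fin_valuation_ind (g := fun v => - r v)): a => a IH j out.
case: (ltP (r a) (y a)) => [ry | yr].
  case: (eqVneq a x) => [-> | ax]; first by left; apply: tight_root.
  by right; apply: lt_le_trans ry (y_le0 ax).
have [k ink] : exists k, D a k * f k < 0.
  by apply: (sum_le0_has_neg out); rewrite div subr_le0.
have [c [Jc drop] outc] := flow_in kkt ink.
have rac : r a < r c by rewrite -subr_gt0 drop mulr_gt0.
have [|tc|rc] := IH c _ k outc; first by rewrite ltrN2.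
  by left; apply: (tight_step P_shortest lam_gt0 r_lip tc Jc drop).1.
by right; apply: lt_trans rac rc.
Qed.

End Propagation.

(* Negating y, r and f exchanges sources and sinks. *)
Lemma inflow_tight_or_pos x P lam y r f b j :
  (forall v, shortest_path tl hd w x v (P v)) -> 0 < lam -> kkt_flow lam y r f ->
  (forall v, v != x -> 0 <= y v) -> D b j * f j < 0 ->
  tight x P (fun v => - r v) lam b \/ 0 < r b.
Proof.
move=> P_shortest lam_gt0 /kkt_flow_opp kkt y_ge0; rewrite -oppr_gt0 -mulrN => inb.
have y_le0 v : v != x -> - y v <= 0 by move/y_ge0; rewrite oppr_le0.
have [tb|rb] := outflow_tight_or_neg P_shortest lam_gt0 kkt y_le0 inb; first by left.
by right; rewrite -oppr_lt0.
Qed.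

Section Circulation.
Variables (s t : 'I_n) (Ps Pt : 'I_n -> seq 'I_n) (lam : R) (r : 'I_n -> R).
Hypothesis Ps_shortest : forall v, shortest_path tl hd w s v (Ps v).
Hypothesis Pt_shortest : forall v, shortest_path tl hd w t v (Pt v).
Hypothesis s_uniq : forall v, unique_shortest_path tl hd w s v.
Hypothesis t_uniq : forall v, unique_shortest_path tl hd w t v.
Hypothesis lam_gt0 : 0 < lam.
Hypothesis r_lip : forall j, `|r (tl j) - r (hd j)| <= lam * w j.

Local Notation tight_s := (tight s Ps r lam).
Local Notation tight_t := (tight t Pt (fun v => - r v) lam).

Variable d : 'I_m -> R.
Hypothesis d_circ : forall v, \sum_j D v j * d j = 0.
Hypothesis d_steep : forall k, d k != 0 ->
  exists a b, steep lam r k a b /\ (tight_s a \/ tight_t b).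

Lemma tight_s_step k c a : tight_s c -> steep lam r k c a ->
  tight_s a /\ dist s Ps a = dist s Ps c + w k.
Proof. by move=> tsc [Jk drop]; apply: tight_step tsc Jk drop. Qed.

Lemma tight_t_step k a c : tight_t c -> steep lam r k a c ->
  tight_t a /\ dist t Pt a = dist t Pt c + w k.
Proof.
move=> ttc [Jk drop]; apply: (tight_step Pt_shortest lam_gt0 _ ttc).
- by move=> j; rewrite -opprD normrN.
- by rewrite joinsC.
- by rewrite -drop opprK addrC.
Qed.

Lemma circulation_vertex_eq0 v j : D v j != 0 ->
  (forall k, k != j -> D v k != 0 -> d k = 0) -> d j = 0.
Proof.
move=> vj others; have := d_circ v; rewrite (bigD1 j) //= big1 ?addr0.
  by move/eqP; rewrite mulf_eq0 (negbTE vj) => /eqP.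
move=> k kj; case: (eqVneq (D v k) 0) => [->|vk]; first by rewrite mul0r.
by rewrite others ?mulr0.
Qed.

(* Induction on r b: any other edge at b carrying the circulation either leaves b
   downhill, or enters b from its parent in the shortest-path tree of s, i.e. is j. *)
Lemma steep_from_tight_s_eq0 b : ~~ tight_t b ->
  forall j a, steep lam r j a b -> tight_s a -> d j = 0.
Proof.
elim/(fin_valuation_ind (g := r)): b => b IH nttb j a sab tsa.
have [tsb db] := tight_s_step tsa sab.
have bj : D b j != 0 by apply: incidence_joins_neq0; rewrite joinsC; apply: sab.1.
apply: (circulation_vertex_eq0 bj) => k kj bk.
case: (eqVneq (d k) 0) => // /d_steep[a' [b' [sk tst]]].
case: (incidence_neq0_joins bk sk.1) => eb; [subst a' | subst b'].
  have rb : r b' < r b by rewrite -subr_gt0 sk.2 mulr_gt0.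
  have nttb' : ~~ tight_t b' by apply: contra nttb => ttb'; apply: (tight_t_step ttb' sk).1.
  exact: IH b' rb nttb' k b sk tsb.
case: tst => [tsa'|ttb]; last by rewrite ttb in nttb.
have [_ db'] := tight_s_step tsa' sk.
have aa' := dist_parent_uniq Ps_shortest s_uniq sab.1 sk.1 db db'; subst a'.
by rewrite (joins_inj sab.1 sk.1) eqxx in kj.
Qed.

Lemma steep_to_tight_t_eq0 a : forall j b, steep lam r j a b -> tight_t b -> d j = 0.
Proof.
elim/(fin_valuation_ind (g := fun v => - r v)): a => a IH j b sab ttb.
have [tta da] := tight_t_step ttb sab.
apply: (circulation_vertex_eq0 (incidence_joins_neq0 sab.1)) => k kj ak.
case: (eqVneq (d k) 0) => // /d_steep[a' [b' [sk tst]]].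
case: (incidence_neq0_joins ak sk.1) => ea; [subst a' | subst b']; last first.
  have ra : - r a' < - r a by rewrite ltrN2 -subr_gt0 sk.2 mulr_gt0.
  exact: IH a' ra k a sk tta.
case: (boolP (tight_t b')) => [ttb'|nttb']; last first.
  case: tst => [tsa|ttb']; last by rewrite ttb' in nttb'.
  exact: (steep_from_tight_s_eq0 nttb' sk tsa).
have [_ da'] := tight_t_step ttb' sk.
have bb' : b = b'.
  apply: (dist_parent_uniq Pt_shortest t_uniq _ _ da da'); rewrite joinsC.
    exact: sab.1.
  exact: sk.1.
subst b'; by rewrite (joins_inj sab.1 sk.1) eqxx in kj.
Qed.

Lemma circulation_eq0 k : d k = 0.
Proof.
case: (eqVneq (d k) 0) => // /d_steep[a [b [sab [tsa|ttb]]]].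
  case: (boolP (tight_t b)) => [ttb|nttb]; first exact: (steep_to_tight_t_eq0 sab ttb).
  exact: (steep_from_tight_s_eq0 nttb sab tsa).
exact: (steep_to_tight_t_eq0 sab ttb).
Qed.

End Circulation.

Section FlowUniqueness.
Variables (s t : 'I_n) (Ps Pt : 'I_n -> seq 'I_n) (lam : R) (y r : 'I_n -> R).
Hypothesis Ps_shortest : forall v, shortest_path tl hd w s v (Ps v).
Hypothesis Pt_shortest : forall v, shortest_path tl hd w t v (Pt v).
Hypothesis s_uniq : forall v, unique_shortest_path tl hd w s v.
Hypothesis t_uniq : forall v, unique_shortest_path tl hd w t v.
Hypothesis lam_gt0 : 0 < lam.
Hypothesis y_le0 : forall v, v != s -> y v <= 0.
Hypothesis y_ge0 : forall v, v != t -> 0 <= y v.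

Lemma kkt_support_steep f k : kkt_flow lam y r f -> f k != 0 -> exists a b,
  steep lam r k a b /\ (tight s Ps r lam a \/ tight t Pt (fun v => - r v) lam b).
Proof.
move=> kkt fk0; have [a out] : exists a, 0 < D a k * f k.
  case: (ltrgtP (f k) 0) => [fk_lt0|fk_gt0|fk_eq0]; last by rewrite fk_eq0 eqxx in fk0.
    by exists (hd k); rewrite incidence_hd mulN1r oppr_gt0.
  by exists (tl k); rewrite incidence_tl mul1r.
have [b [Jk drop] inb] := flow_out kkt out.
exists a, b; split=> //.
have [ta|ra] := outflow_tight_or_neg Ps_shortest lam_gt0 kkt y_le0 out; first by left.
have [tb|rb] := inflow_tight_or_pos Pt_shortest lam_gt0 kkt y_ge0 inb; first by right.
by have := mulr_gt0 lam_gt0 (w_gt0 k); rewrite -drop; lra.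
Qed.

Lemma kkt_flow_uniq f1 f2 : kkt_flow lam y r f1 -> kkt_flow lam y r f2 -> f1 =1 f2.
Proof.
move=> kkt1 kkt2 j; have [r_lip _ div1] := kkt1; have [_ _ div2] := kkt2.
apply/eqP; rewrite -subr_eq0; apply/eqP.
apply: (circulation_eq0 Ps_shortest Pt_shortest s_uniq t_uniq lam_gt0 r_lip
  (d := fun j => f1 j - f2 j)) => [v|k].
  by under eq_bigr do rewrite mulrBr; rewrite sumrB div1 div2 subrr.
case: (eqVneq (f1 k) 0) => [f1k0 | f1k _]; last exact: kkt_support_steep kkt1 f1k.
by rewrite f1k0 sub0r oppr_eq0 => f2k; apply: kkt_support_steep kkt2 f2k.
Qed.

End FlowUniqueness.

Lemma graph_lasso_min_uniq s t lam (b1 b2 : 'cV[R]_m) :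
  0 < lam -> assumption_A1 tl hd w s t ->
  lasso_min Q lam (yvec R s t) b1 -> lasso_min Q lam (yvec R s t) b2 -> b1 = b2.
Proof.
move=> lam_gt0 A1 min1 min2.
have s_paths v : exists p, shortest_path tl hd w s v p by have [p []] := (A1 v).1; exists p.
have t_paths v : exists p, shortest_path tl hd w t v p by have [p []] := (A1 v).2; exists p.
have [Ps Ps_shortest] := choice s_paths; have [Pt Pt_shortest] := choice t_paths.
have y_le0 v : v != s -> yvec R s t v 0 <= 0.
  by move/negbTE=> vs; rewrite mxE vs sub0r oppr_le0.
have y_ge0 v : v != t -> 0 <= yvec R s t v 0 by move/negbTE=> vt; rewrite mxE vt subr0.
have kkt1 := lasso_min_kkt_flow lam_gt0 min1.
have kkt2 := lasso_min_kkt_flow lam_gt0 min2.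
rewrite -(lasso_min_fit lam_gt0 min1 min2) in kkt2.
apply/matrixP => j i; rewrite [i]ord1; apply: (mulIf (invr_neq0 (lt0r_neq0 (w_gt0 j)))).
exact: (kkt_flow_uniq Ps_shortest Pt_shortest (fun v => (A1 v).1) (fun v => (A1 v).2)
  lam_gt0 y_le0 y_ge0 kkt1 kkt2).
Qed.

End WeightedGraph.

Theorem lemma3p2 (R : realType) (n m : nat) (tl hd : 'I_m -> 'I_n)
  (w : 'I_m -> R) (s t : 'I_n) (lambda : R) :
  simple_graph tl hd ->
  connected_graph tl hd ->
  (forall j, 0 < w j) ->
  s != t ->
  assumption_A1 tl hd w s t ->
  0 < lambda ->
  exists! beta : 'cV[R]_m,
    forall beta' : 'cV[R]_m,
      lasso_obj tl hd w (yvec R s t) lambda beta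
      <= lasso_obj tl hd w (yvec R s t) lambda beta'.
Proof.
move=> simple _ w_gt0 _ A1 lambda_gt0.
have [beta beta_min] := lasso_min_exists (Qmx tl hd w) lambda_gt0 (yvec R s t).
exists beta; split=> // beta' beta'_min.
exact: (graph_lasso_min_uniq simple w_gt0 lambda_gt0 A1 beta_min beta'_min).
Qed.
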